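(* Let $n\ge 2$ and let $\mathcal{P}_E(SD_{8n})$ be the enhanced power graph of the semidihedral group $SD_{8n}$. Put $\alpha=8n-1$, $\beta=6n-1$, $\gamma=4n-1$, and let $Q$ be the $(n+4)\times(n+4)$ matrix with rows and columns indexed by $1,\dots,n+4$ given by: row $1$: $Q_{11}=0$, $Q_{12}=\sqrt{\alpha^2+\beta^2}$, $Q_{13}=(4n-2)\sqrt{\alpha^2+\gamma^2}$, $Q_{1j}=2\sqrt{\alpha^2+9}$ for $4\le j\le n+3$, $Q_{1,n+4}=2n\sqrt{\alpha^2+1}$; row $2$: $Q_{21}=\sqrt{\alpha^2+\beta^2}$, $Q_{22}=0$, $Q_{23}=(4n-2)\sqrt{\beta^2+\gamma^2}$, $Q_{2j}=2\sqrt{\beta^2+9}$ for $4\le j\le n+3$, $Q_{2,n+4}=0$; row $3$: $Q_{31}=\sqrt{\alpha^2+\gamma^2}$, $Q_{32}=\sqrt{\beta^2+\gamma^2}$, $Q_{33}=(4n-3)(4n-1)\sqrt2$, all other entries $0$; row $i$ for $4\le i\le n+3$: $Q_{i1}=\sqrt{\alpha^2+9}$, $Q_{i2}=\sqrt{\beta^2+9}$, $Q_{ii}=3\sqrt2$, all other entries $0$; row $n+4$: $Q_{n+4,1}=\sqrt{\alpha^2+1}$, all other entries $0$. Then the Sombor spectrum of $\mathcal{P}_E(SD_{8n})$ consists of $-(4n-1)\sqrt2$ with multiplicity $4n-3$, $0$ with multiplicity $2n-1$, $-3\sqrt2$ with multiplicity $n$, together with the eigenvalues (with multiplicity) of $Q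$.
   Context: For a finite simple graph $\Gamma$ with vertices $u_1,\dots,u_N$, the Sombor matrix $S(\Gamma)$ has $(i,j)$ entry $\sqrt{\deg(u_i)^2+\deg(u_j)^2}$ if $u_i,u_j$ are adjacent and $0$ otherwise; the Sombor spectrum is the multiset of its eigenvalues. $SD_{8n}=\langle a,b: a^{4n}=b^2=e,\ ba=a^{2n-1}b\rangle$ of order $8n$. The enhanced power graph $\mathcal{P}_E(G)$ of a group $G$ has vertex set $G$, two distinct vertices being adjacent iff both belong to a common cyclic subgroup of $G$. *)

From HB Require Import structures.
From mathcomp Require Import all_boot all_order all_algebra all_fingroup.
Set Implicit Arguments. Unset Strict Implicit. Unset Printing Implicit Defensive.
Import Order.TTheory GRing.Theory Num.Theory.

Definition enh_power_adj (gT : finGroupType) (x y : gT) : bool :=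
  (x != y) && [exists z : gT, (x \in <[z]>%g) && (y \in <[z]>%g)].

Definition gdeg (T : finType) (e : rel T) (u : T) : nat := #|[set v | e u v]|.

Local Open Scope ring_scope.

Definition sombor_matrix (R : rcfType) (T : finType) (e : rel T) : 'M[R]_#|T| :=
  \matrix_(i, j)
    (if e (enum_val i) (enum_val j)
     then Num.sqrt ((gdeg e (enum_val i))%:R ^+ 2 + (gdeg e (enum_val j))%:R ^+ 2)
     else 0).

(* The (n+4)x(n+4) matrix Q of the paper, indices shifted to 0-based:
   paper index k corresponds to ordinal k-1. *)
Definition Qmat (R : rcfType) (n : nat) : 'M[R]_(n + 4) :=
  let al : R := (8 * n - 1)%:R in
  let be : R := (6 * n - 1)%:R in
  let ga : R := (4 * n - 1)%:R in
  let s (x y : R) := Num.sqrt (x ^+ 2 + y ^+ 2) in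
  \matrix_(i, j)
    (let i' := nat_of_ord i in let j' := nat_of_ord j in
     if i' == 0%N then
       (if j' == 0%N then 0
        else if j' == 1%N then s al be
        else if j' == 2%N then (4 * n - 2)%:R * s al ga
        else if (3 <= j' <= n + 2)%N then 2 * s al 3
        else n.*2%:R * s al 1)
     else if i' == 1%N then
       (if j' == 0%N then s al be
        else if j' == 1%N then 0
        else if j' == 2%N then (4 * n - 2)%:R * s be ga
        else if (3 <= j' <= n + 2)%N then 2 * s be 3
        else 0)
     else if i' == 2%N then
       (if j' == 0%N then s al ga
        else if j' == 1%N then s be ga
        else if j' == 2%N then ((4 * n - 3) * (4 * n - 1))%:R * Num.sqrt 2
        else 0)
     else if (i' <= n + 2)%N then
       (if j' == 0%N then s al 3
        else if j' == 1%N then s be 3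
        else if j' == i' then 3 * Num.sqrt 2
        else 0)
     else
       (if j' == 0%N then s al 1 else 0)).

(* The group SD_{8n} splits into n + 4 cells: {1}, {a^(2n)}, the other
   elements of <a>, the n pairs {a^l b, a^(l+2n) b} with l odd (the generators
   of the cyclic subgroups of order 4 outside <a>), and the 2n involutions a^l b
   with l even.  Whether two distinct elements lie in a common cyclic subgroup
   only depends on their cells, hence so do the degrees, and off the diagonal
   the Sombor matrix is constant on each block of cells.  For such a matrix the
   differences e_x - e_y of two vertices of a cell c are eigenvectors for the
   eigenvalue -M(c,c), while the cell indicators span an invariant subspace on
   which it acts as the quotient matrix; here that quotient matrix is Q. *)

From HB Require Import structures.
From mathcomp Require Import all_boot all_order all_algebra all_fingroup.
From mathcomp Require Import cyclic zify.
Set Implicit Arguments. Unset Strict Implicit. Unset Printing Implicit Defensive.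
Import Order.TTheory GRing.Theory Num.Theory.
Local Open Scope ring_scope.

Lemma char_poly_similar (F : fieldType) n1 n2 (P : 'M[F]_(n1, n2))
    (A : 'M_n1) (B : 'M_n2) :
  n1 = n2 -> row_free P -> A *m P = P *m B -> char_poly A = char_poly B.
Proof.
move=> e; case: n2 / e P B => P B; rewrite row_free_unit => uP AP.
pose P' := map_mx polyC P.
have XP : char_poly_mx A *m P' = P' *m char_poly_mx B.
  by rewrite /char_poly_mx mulmxBl mulmxBr scalar_mxC -!map_mxM AP.
have nzP : \det P' != 0.
  by rewrite det_map_mx polyC_eq0 -unitfE -unitmxE.
by apply: (mulIf nzP); rewrite -det_mulmx XP det_mulmx mulrC.
Qed.

Lemma char_poly_block_diag (R : comNzRingType) n1 n2 (A : 'M[R]_n1) (B : 'M[R]_n2) :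
  char_poly (block_mx A 0 0 B) = char_poly A * char_poly B.
Proof. by rewrite /char_poly char_block_diag_mx det_ublock. Qed.

Lemma char_poly_diag (R : comNzRingType) n (d : 'rV[R]_n) :
  char_poly (diag_mx d) = \prod_(i < n) ('X - (d 0 i)%:P).
Proof.
rewrite char_poly_trig ?diag_mx_is_trig //.
by apply: eq_bigr => i _; rewrite mxE eqxx.
Qed.

Lemma sum_enum_val (V : nmodType) (T : finType) (F : T -> V) :
  \sum_(i < #|T|) F (enum_val i) = \sum_x F x.
Proof. by rewrite -(big_enum_val (A := T)). Qed.

Lemma sum_mul_eq (R : pzSemiRingType) (T : finType) (y : T) (F : T -> R) :
  \sum_x F x * (y == x)%:R = F y.
Proof.
rewrite (bigD1 y) //= eqxx mulr1 big1 ?addr0 // => x /negbTE.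
by rewrite eq_sym => ->; rewrite mulr0.
Qed.

Lemma sum_pred_eq (R : pzSemiRingType) (T : finType) (P : pred T) (y : T) :
  \sum_(x | P x) ((y == x)%:R : R) = (P y)%:R.
Proof.
rewrite big_mkcond (bigD1 y) //= eqxx big1 ?addr0; first by case: (P y).
by move=> x /negbTE; rewrite eq_sym => ->; case: (P x).
Qed.

Section CellConstantMatrix.

Variables (R : numFieldType) (T : finType) (k : nat) (M : 'M[R]_k).
Variables (cell : T -> 'I_k) (rep : 'I_k -> T).
Hypothesis repK : cancel rep cell.

Definition cell_card (c : 'I_k) := #|[set x | cell x == c]|.

Definition cell_const_mx : 'M[R]_#|T| :=
  \matrix_(i, j) ((enum_val i != enum_val j)%:R * M (cell (enum_val i)) (cell (enum_val j))).

Definition cell_quot_mx : 'M[R]_k :=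
  \matrix_(r, c) ((cell_card c - (r == c))%:R * M r c).

Let S := cell_const_mx.
Let NR := [set x | x != rep (cell x)].
Let v (j : 'I_#|NR|) : T := enum_val j.

Let Pc : 'M[R]_(#|T|, k) := \matrix_(i, c) (cell (enum_val i) == c)%:R.
Let Pd : 'M[R]_(#|T|, #|NR|) :=
  \matrix_(i, j) ((v j == enum_val i)%:R - (rep (cell (v j)) == enum_val i)%:R).
Let d : 'rV[R]_#|NR| := \row_j - M (cell (v j)) (cell (v j)).
(* The columns of [P] are the cell indicators and the differences
   e_x - e_(rep (cell x)); in this basis [S] is block diagonal. *)
Let P := row_mx Pc Pd.

Lemma card_cell_reps : (k + #|NR|)%N = #|T|.
Proof.
rewrite -(cardsC NR) addnC; congr (_ + _)%N.
have -> : ~: NR = rep @: [set: 'I_k].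
  apply/setP => x; rewrite !inE negbK; apply/eqP/imsetP => [-> | [c _ ->]].
    by exists (cell x).
  by rewrite repK.
by rewrite card_imset ?cardsT ?card_ord //; exact: can_inj repK.
Qed.

Lemma sum_cell_neq (x : T) (c : 'I_k) :
  \sum_(y | cell y == c) ((x != y)%:R : R) = (cell_card c - (cell x == c))%:R.
Proof.
rewrite natrB; last first.
  by case: eqP => // <-; rewrite card_gt0; apply/set0Pn; exists x; rewrite inE.
rewrite (eq_bigr (fun y => 1 - (x == y)%:R)); last first.
  by move=> y _; case: (x == y); rewrite ?subrr ?subr0.
by rewrite sumrB sumr_const /cell_card cardsE sum_pred_eq.
Qed.

Lemma cell_const_mx_cells : S *m Pc = Pc *m cell_quot_mx.
Proof.
apply/matrixP => i c; rewrite !mxE.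
under eq_bigr do rewrite !mxE.
under [RHS]eq_bigr do rewrite !mxE.
rewrite (sum_enum_val (fun y => (enum_val i != y)%:R * M _ (cell y) * (cell y == c)%:R)).
rewrite [RHS](bigD1 (cell (enum_val i))) //= eqxx mul1r [X in _ + X]big1 ?addr0; last first.
  by move=> r /negbTE; rewrite eq_sym => ->; rewrite mul0r.
rewrite -sum_cell_neq mulr_suml [RHS]big_mkcond /=; apply: eq_bigr => y _.
by case: (eqVneq (cell y) c) => [-> | ne]; rewrite ?eqxx ?mulr1 ?(negbTE ne) ?mulr0.
Qed.

Lemma cell_const_mx_diffs : S *m Pd = Pd *m diag_mx d.
Proof.
rewrite mul_mx_diag; apply/matrixP => i j; rewrite !mxE.
under eq_bigr do rewrite !mxE.
pose F y := (enum_val i != y)%:R * M (cell (enum_val i)) (cell y).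
rewrite (sum_enum_val (fun y => F y * ((v j == y)%:R - (rep (cell (v j)) == y)%:R))).
under eq_bigr do rewrite mulrBr.
rewrite sumrB !sum_mul_eq {}/F.
have := enum_valP j; rewrite inE -/(v j).
move: (v j) (enum_val i) => y x yNrep; have cw := repK (cell y).
have [->|xy] := eqVneq x y.
  by rewrite yNrep eq_sym (negbTE yNrep) cw /= mul0r sub0r subr0 !mul1r.
have [->|xw] := eqVneq x (rep (cell y)).
  by rewrite cw /= mul0r mul1r subr0 sub0r mulN1r opprK.
by rewrite cw !subrr mul0r.
Qed.

Lemma cell_const_mx_block : S *m P = P *m block_mx cell_quot_mx 0 0 (diag_mx d).
Proof.
rewrite mul_mx_row mul_row_block !mulmx0 addr0 add0r.
by rewrite cell_const_mx_cells cell_const_mx_diffs.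
Qed.

Let E (x : T) : 'rV[R]_#|T| := \row_i (x == enum_val i)%:R.

Lemma cell_sum_sub c : ((\sum_(x | cell x == c) E x)%R <= P^T)%MS.
Proof.
apply: (eq_row_sub (lshift _ c)); rewrite tr_row_mx rowKu; apply/rowP => i.
rewrite !mxE summxE; under [RHS]eq_bigr do rewrite mxE.
by rewrite (eq_bigr (fun x => (enum_val i == x)%:R)) ?sum_pred_eq // => x _; rewrite eq_sym.
Qed.

Lemma cell_diff_sub x : x \in NR -> (E x - E (rep (cell x)) <= P^T)%MS.
Proof.
move=> xNR; apply: (eq_row_sub (rshift _ (enum_rank_in xNR x))).
by rewrite tr_row_mx rowKd; apply/rowP => i; rewrite !mxE /v enum_rankK_in.
Qed.

Lemma cell_rep_sub c : (E (rep c) <= P^T)%MS.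
Proof.
pose Sc := [set x | (cell x == c) && (x != rep c)].
have cellE : \sum_(x | cell x == c) E x = E (rep c) + \sum_(x in Sc) E x.
  rewrite (bigD1 (rep c)) ?repK //=; congr (_ + _).
  by apply: eq_bigl => x; rewrite inE.
have repE : E (rep c) *+ #|Sc|.+1 =
    \sum_(x | cell x == c) E x - \sum_(x in Sc) (E x - E (rep c)).
  by rewrite cellE sumrB sumr_const opprB mulrS addrA addrAC addrK addrC.
(* Dividing by the cell size is where characteristic 0 is needed. *)
have -> : E (rep c) = (#|Sc|.+1%:R)^-1 *: (E (rep c) *+ #|Sc|.+1).
  by rewrite -scaler_nat scalerA mulVf ?scale1r // pnatr_eq0.
apply: scalemx_sub; rewrite repE; apply: addmx_sub; first exact: cell_sum_sub.
rewrite -scaleN1r; apply/scalemx_sub/summx_sub => x.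
by rewrite inE => /andP[/eqP <- xNrep]; apply: cell_diff_sub; rewrite inE.
Qed.

Lemma row_free_cells_diffs : row_free P.
Proof.
suff: row_full P^T by rewrite /row_full /row_free mxrank_tr.
rewrite -sub1mx; apply/row_subP => i.
have -> : row i 1%:M = E (enum_val i).
  by apply/rowP => j; rewrite !mxE (inj_eq enum_val_inj).
move: (enum_val i) => x; have [xrep | xNrep] := eqVneq x (rep (cell x)).
  by rewrite xrep cell_rep_sub.
rewrite -(subrK (E (rep (cell x))) (E x)); apply: addmx_sub; last exact: cell_rep_sub.
by apply: cell_diff_sub; rewrite inE.
Qed.

Lemma char_poly_cell_const_mx :
  char_poly cell_const_mx =
  char_poly cell_quot_mx * \prod_c ('X + (M c c)%:P) ^+ (cell_card c).-1.
Proof.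
rewrite (char_poly_similar (esym card_cell_reps) row_free_cells_diffs cell_const_mx_block).
rewrite char_poly_block_diag char_poly_diag; congr (_ * _).
rewrite (eq_bigr (fun j => 'X + (M (cell (v j)) (cell (v j)))%:P)); last first.
  by move=> j _; rewrite /d mxE polyCN opprK.
rewrite -(big_enum_val (fun x => 'X + (M (cell x) (cell x))%:P)) /=.
rewrite (partition_big cell xpredT) //=; apply: eq_bigr => c _.
rewrite (eq_bigr (fun _ => 'X + (M c c)%:P)); last by move=> x /andP[_ /eqP ->].
rewrite prodr_const /cell_card (cardsD1 (rep c)) inE repK eqxx /=.
rewrite add0n; congr (_ ^+ _); apply: eq_card => x; rewrite unfold_in /= !inE [RHS]andbC.
by case: (eqVneq (cell x) c) => [<- | _]; rewrite ?andbT ?andbF.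
Qed.

End CellConstantMatrix.

Local Close Scope ring_scope.

Local Ltac case_lia := do ? case: ifPn; move=> *; lia.

Lemma sum_ord_eq N c : (\sum_(i < N) (i == c :> nat))%N = (c < N).
Proof.
rewrite -(big_mkord xpredT (fun i => (i == c) : nat)).
elim: N => [|N IH]; first by rewrite big_geq.
by rewrite big_nat_recr //= IH; lia.
Qed.

Lemma sum_ord_odd m : (\sum_(i < 2 * m) odd i)%N = m.
Proof.
rewrite -(big_mkord xpredT (fun i => odd i : nat)).
elim: m => [|m IH]; first by rewrite big_geq.
by rewrite mulnS !big_nat_recr //= IH; lia.
Qed.

Lemma sum_ord_even m : (\sum_(i < 2 * m) ~~ odd i)%N = m.
Proof.
rewrite -(big_mkord xpredT (fun i => ~~ odd i : nat)).
elim: m => [|m IH]; first by rewrite big_geq.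
by rewrite mulnS !big_nat_recr //= IH; lia.
Qed.

Definition sd_presentation (n : nat) (gT : finGroupType) (a b : gT) : Prop :=
  [/\ #|gT| = (8 * n)%N, <<[set a; b]>>%g = [set: gT], (a ^+ (4 * n) = 1)%g,
      (b ^+ 2 = 1)%g & (b * a = a ^+ (2 * n - 1) * b)%g].

(* The cell of a^i b^s for i < 4n, numbered as the rows of [Qmat]: the order-4
   elements a^l b and a^(l+2n) b (l odd, l < 2n) form cell 3 + l %/ 2. *)
Definition sd_cell (n i : nat) (s : bool) : nat :=
  if s then (if odd i then (if i < 2 * n then i else i - 2 * n) %/ 2 + 3 else n + 3)
  else if i == 0 then 0 else if i == 2 * n then 1 else 2.

Definition sd_adj (n c c' : nat) : bool :=
  [|| c == 0, c' == 0, (c <= 2) && (c' <= 2), (c == 1) && (3 <= c' <= n + 2),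
      (c' == 1) && (3 <= c <= n + 2) | (c == c') && (3 <= c <= n + 2)].

Definition sd_deg (n c : nat) : nat :=
  if c == 0 then 8 * n - 1 else if c == 1 then 6 * n - 1
  else if c == 2 then 4 * n - 1 else if c <= n + 2 then 3 else 1.

Definition sd_card (n c : nat) : nat :=
  if c == 0 then 1 else if c == 1 then 1 else if c == 2 then 4 * n - 2
  else if c <= n + 2 then 2 else 2 * n.

Definition sd_rep (n c : nat) : nat * bool :=
  if c == 0 then (0, false) else if c == 1 then (2 * n, false)
  else if c == 2 then (1, false) else if c <= n + 2 then (2 * (c - 3) + 1, true)
  else (0, true).

Definition shift2n (n l : nat) : nat := if l < 2 * n then l + 2 * n else l - 2 * n.

Section SemiDihedral.
Variables (n : nat) (gT : finGroupType) (a b : gT).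
Hypothesis sdP : sd_presentation n a b.
Local Open Scope group_scope.

Lemma invb : b^-1 = b.
Proof. by case: sdP => _ _ _ b2 _; rewrite -[b^-1]mulg1 -b2 expgS expg1 mulKg. Qed.

Lemma mulbb : b * b = 1.
Proof. by case: sdP => _ _ _ b2 _; rewrite -b2 expgS expg1. Qed.

Lemma cycle_mul_cycle : <[a]> * <[b]> = [set: gT].
Proof.
case: sdP => _ gen _ _ ba.
have nab : b \in 'N(<[a]>).
  apply/normP/eqP; rewrite eqEcard cardJg leqnn andbT -cycleJ cycle_subG.
  by rewrite /conjg invb mulgA ba -mulgA mulbb mulg1 mem_cycle.
rewrite -gen -joingE -joing_idl -joing_idr norm_joinEr //.
by rewrite cycle_subG.
Qed.

Lemma n_gt0 : (0 < n)%N.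
Proof.
by case: sdP => cardG _ _ _ _; have := cardG_gt0 [set: gT]%G; rewrite cardsT cardG; lia.
Qed.

Lemma sd_orders : [/\ #[a] = (4 * n)%N, #[b] = 2 & <[a]> :&: <[b]> = 1].
Proof.
case: sdP => cardG _ a4n b2 _; have n_gt0 := n_gt0.
have cardM : (#[a] * #[b] = 8 * n * #|<[a]> :&: <[b]>|)%N.
  by rewrite -cardG -cardsT -cycle_mul_cycle mul_cardG.
have le_a : (#[a] <= 4 * n)%N.
  by apply: dvdn_leq; [lia | rewrite order_dvdn a4n].
have le_b : (#[b] <= 2)%N by apply: dvdn_leq; [lia | rewrite order_dvdn b2].
have cap_gt0 : (0 < #|<[a]> :&: <[b]>|)%N := cardG_gt0 (<[a]> :&: <[b]>)%G.
have := leq_mul le_a le_b => le_ab.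
have cap1 : #|<[a]> :&: <[b]>| = 1%N by nia.
by split; [nia | nia | apply/eqP; rewrite trivg_card1 cap1].
Qed.

Lemma order_a : #[a] = (4 * n)%N. Proof. by case: sd_orders. Qed.
Lemma order_b : #[b] = 2. Proof. by case: sd_orders. Qed.
Lemma cycle_a_cap_b : <[a]> :&: <[b]> = 1. Proof. by case: sd_orders. Qed.

Definition sd_elt (i : nat) (s : bool) : gT := a ^+ i * (if s then b else 1).

Lemma expa_mod i : a ^+ i = a ^+ (i %% (4 * n)).
Proof. by rewrite -order_a expg_mod_order. Qed.

Lemma sd_elt_surj g : exists i s, (i < 4 * n)%N /\ g = sd_elt i s.
Proof.
have : g \in <[a]> * <[b]> by rewrite cycle_mul_cycle inE.
case/mulsgP => x y /cycleP[i ->] /cycleP[j ->] ->.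
exists (i %% (4 * n))%N, (odd j); split; first by rewrite ltn_mod; have := n_gt0; lia.
rewrite /sd_elt -expa_mod -(expg_mod j (_ : b ^+ 2 = 1)) ?modn2; last by case: sdP.
by case: (odd j); rewrite ?expg1 ?expg0.
Qed.

Lemma sd_elt_inj i j s t : (i < 4 * n)%N -> (j < 4 * n)%N ->
  sd_elt i s = sd_elt j t -> i = j /\ s = t.
Proof.
move=> lt_i lt_j; rewrite /sd_elt => e.
set Bs := (if s then b else 1) in e *; set Bt := (if t then b else 1) in e *.
have Ebs : (a ^+ j)^-1 * a ^+ i = Bt * Bs^-1.
  by rewrite -(mulgK Bs (a ^+ i)) e -!mulgA mulKg.
have : (a ^+ j)^-1 * a ^+ i \in <[a]> :&: <[b]>.
  rewrite inE {2}Ebs groupM ?groupV ?mem_cycle //=.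
  by rewrite groupM ?groupV // /Bs /Bt; [case: (t) | case: (s)]; rewrite ?group1 ?cycle_id.
rewrite cycle_a_cap_b inE -eq_mulVg1 eq_expg_mod_order order_a !modn_small //.
move/eqP=> eq_ij; split => //; move: Ebs; rewrite eq_ij mulVg => /esym /eqP.
rewrite -eq_mulgV1 /Bs /Bt; case: (s); case: (t) => //=;
  by rewrite ?(eq_sym 1) -order_eq1 order_b.
Qed.

Definition coord (g : gT) : nat * bool :=
  if [pick u : 'I_(4 * n) * bool | sd_elt u.1 u.2 == g] is Some u then (val u.1, u.2)
  else (0%N, false).

Lemma coord_spec g : ((coord g).1 < 4 * n)%N /\ sd_elt (coord g).1 (coord g).2 = g.
Proof.
rewrite /coord; case: pickP => [u /eqP <- | none]; first by split => //=; exact: ltn_ord.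
have [i [s [lt_i gE]]] := sd_elt_surj g.
by have := none (Ordinal lt_i, s); rewrite /= -gE eqxx.
Qed.

Lemma coord_lt g : ((coord g).1 < 4 * n)%N. Proof. by case: (coord_spec g). Qed.
Lemma coordK g : sd_elt (coord g).1 (coord g).2 = g. Proof. by case: (coord_spec g). Qed.

Lemma coord_sd_elt i s : (i < 4 * n)%N -> coord (sd_elt i s) = (i, s).
Proof.
move=> lt_i; have [] := coord_spec (sd_elt i s).
by case: (coord _) => j t /= lt_j /(sd_elt_inj lt_j lt_i) [-> ->].
Qed.

Lemma card_coord (P : nat -> bool -> bool) :
  #|[set g | P (coord g).1 (coord g).2]| = (\sum_(i < 4 * n) (P i true + P i false))%N.
Proof.
rewrite -sum1_card (reindex (fun u : 'I_(4 * n) * bool => sd_elt u.1 u.2)) /=; last first.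
  apply: onW_bij; exists (fun g => (Ordinal (coord_lt g), (coord g).2)).
    by move=> [i s]; congr (_, _); [apply: val_inj |]; rewrite /= coord_sd_elt.
  by move=> g; exact: coordK.
rewrite (eq_bigl (fun u : 'I_(4 * n) * bool => P u.1 u.2)); last first.
  by move=> [i s]; rewrite inE /= coord_sd_elt.
rewrite big_mkcond -(pair_bigA _ (fun (i : 'I_(4 * n)) (s : bool) => (P i s : nat))).
by apply: eq_bigr => i _; rewrite big_bool.
Qed.

Lemma mulb_expa i : b * a ^+ i = a ^+ (i * (2 * n - 1)) * b.
Proof.
case: sdP => _ _ _ _ ba; elim: i => [|i IH]; first by rewrite mul0n !expg0 mulg1 mul1g.
rewrite expgSr mulgA IH -mulgA ba mulgA -expgD; congr (a ^+ _ * b).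
by rewrite mulSn addnC.
Qed.

Lemma expa_4n q r : a ^+ (4 * n * q + r) = a ^+ r.
Proof. by case: sdP => _ _ a4n _ _; rewrite expgD expgM a4n expg1n mul1g. Qed.

Lemma sd_elt_sqr l : sd_elt l true ^+ 2 = a ^+ (2 * n * l).
Proof.
rewrite /sd_elt expgS expg1 -mulgA (mulgA b) mulb_expa -mulgA mulbb mulg1 -expgD.
by have n_gt0 := n_gt0; congr (a ^+ _); nia.
Qed.

Lemma sd_elt_sqr_odd l : odd l -> sd_elt l true ^+ 2 = a ^+ (2 * n).
Proof.
move=> odd_l; rewrite sd_elt_sqr (divn_eq l 2) modn2 odd_l.
by rewrite (_ : 2 * n * _ = 4 * n * (l %/ 2) + 2 * n)%N ?expa_4n //; nia.
Qed.

Lemma sd_elt_sqr_even l : ~~ odd l -> sd_elt l true ^+ 2 = 1.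
Proof.
move=> even_l; rewrite sd_elt_sqr (divn_eq l 2) modn2 (negbTE even_l).
by rewrite (_ : 2 * n * _ = 4 * n * (l %/ 2) + 0)%N ?expa_4n //; nia.
Qed.

Lemma sd_elt_expg4 l : sd_elt l true ^+ 4 = 1.
Proof.
rewrite (_ : 4 = 2 * 2)%N // expgM sd_elt_sqr -expgM.
by rewrite (_ : 2 * n * l * 2 = 4 * n * l + 0)%N ?expa_4n //; nia.
Qed.

Lemma mul_a2n_sd_elt l : (l < 4 * n)%N ->
  a ^+ (2 * n) * sd_elt l true = sd_elt (shift2n n l) true.
Proof.
move=> lt_l; rewrite /sd_elt mulgA -expgD /shift2n; case: ifPn => lt_l2; first by rewrite addnC.
by rewrite (_ : 2 * n + l = 4 * n * 1 + (l - 2 * n))%N ?expa_4n //; lia.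
Qed.

Lemma mem_cycle_sd_elt l x : (l < 4 * n)%N -> x \in <[sd_elt l true]> ->
  [|| x == 1, x == sd_elt l true, odd l && (x == a ^+ (2 * n))
    | odd l && (x == sd_elt (shift2n n l) true)].
Proof.
move=> lt_l /cycleP[k ->]; rewrite -(expg_mod k (sd_elt_expg4 l)).
have : (k %% 4 < 4)%N by rewrite ltn_mod.
case: (k %% 4)%N => [|[|[|[|r]]]] // _; first by rewrite expg0 eqxx.
- by rewrite expg1 eqxx orbT.
- case: (boolP (odd l)) => [odd_l | even_l]; first by rewrite sd_elt_sqr_odd // eqxx !orbT.
  by rewrite sd_elt_sqr_even ?eqxx.
- rewrite expgSr; case: (boolP (odd l)) => [odd_l | even_l].
    by rewrite sd_elt_sqr_odd // mul_a2n_sd_elt // eqxx !orbT.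
  by rewrite sd_elt_sqr_even ?mul1g ?eqxx ?orbT.
Qed.

Definition cellg (g : gT) : nat := sd_cell n (coord g).1 (coord g).2.

Lemma cellg_sd_elt i s : (i < 4 * n)%N -> cellg (sd_elt i s) = sd_cell n i s.
Proof. by move=> lt_i; rewrite /cellg coord_sd_elt. Qed.

Lemma cellgP x : exists i s, [/\ (i < 4 * n)%N, x = sd_elt i s & cellg x = sd_cell n i s].
Proof. by exists (coord x).1, (coord x).2; rewrite coordK coord_lt. Qed.

Lemma cellg_lt x : (cellg x < n + 4)%N.
Proof. by have [i [[] [lt_i _ ->]]] := cellgP x; rewrite /sd_cell; case_lia. Qed.

Lemma cellg1 : cellg 1 = 0%N.
Proof.
have -> : 1 = sd_elt 0 false by rewrite /sd_elt expg0 mulg1.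
by rewrite cellg_sd_elt //; have := n_gt0; lia.
Qed.

Lemma cellg_a2n : cellg (a ^+ (2 * n)) = 1%N.
Proof.
have -> : a ^+ (2 * n) = sd_elt (2 * n)%N false by rewrite /sd_elt mulg1.
by have n_gt0 := n_gt0; rewrite cellg_sd_elt /sd_cell; [case_lia | lia].
Qed.

Lemma cellg_cycle_a x : x \in <[a]> -> (cellg x <= 2)%N.
Proof.
case/cycleP => j ->; rewrite expa_mod -(mulg1 (a ^+ _)) -/(sd_elt _ false).
by have n_gt0 := n_gt0; rewrite cellg_sd_elt /sd_cell; [case_lia | rewrite ltn_mod; lia].
Qed.

Lemma cellg0P x : cellg x = 0%N -> x = 1.
Proof.
have [i [s [lt_i -> ->]]] := cellgP x; rewrite /sd_cell /sd_elt.
case: s => cell0; first by exfalso; move: cell0; case_lia.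
have -> : i = 0%N by move: cell0; case_lia.
by rewrite expg0 mulg1.
Qed.

Lemma cellg1P x : cellg x = 1%N -> x = a ^+ (2 * n).
Proof.
have [i [s [lt_i -> ->]]] := cellgP x; rewrite /sd_cell /sd_elt.
case: s => cell1; first by exfalso; move: cell1; case_lia.
by rewrite mulg1; congr (a ^+ _); move: cell1; case_lia.
Qed.

Lemma cellg_le2P x : (cellg x <= 2)%N -> x \in <[a]>.
Proof.
have [i [s [lt_i -> ->]]] := cellgP x; rewrite /sd_cell /sd_elt.
by case: s => cell_le2; [exfalso; move: cell_le2; case_lia | rewrite mulg1 mem_cycle].
Qed.

Lemma cellg_midP x : (3 <= cellg x <= n + 2)%N ->
  exists l, [/\ (l < 4 * n)%N, odd l, x = sd_elt l true & cellg x = sd_cell n l true].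
Proof.
have [i [s [lt_i -> ->]]] := cellgP x; rewrite /sd_cell.
case: s => mid; last by exfalso; move: mid; case_lia.
by exists i; split => //; move: mid; case_lia.
Qed.

Lemma sd_adj_cycle x y z : x != y -> x \in <[z]> -> y \in <[z]> ->
  sd_adj n (cellg x) (cellg y).
Proof.
move=> xy; have [l [[] [lt_l -> _]]] := cellgP z => xz yz; last first.
  have sub_a : <[sd_elt l false]> \subset <[a]> by rewrite /sd_elt mulg1 cycleX.
  have := cellg_cycle_a (subsetP sub_a _ xz); have := cellg_cycle_a (subsetP sub_a _ yz).
  by rewrite /sd_adj; lia.
have lt_sh : (shift2n n l < 4 * n)%N by rewrite /shift2n; case_lia.
move: (mem_cycle_sd_elt lt_l xz) (mem_cycle_sd_elt lt_l yz) xy.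
by do 2![case/or4P=> [/eqP->| /eqP->| /andP[? /eqP->] | /andP[? /eqP->]]];
  rewrite ?eqxx // => _; rewrite ?cellg1 ?cellg_a2n ?cellg_sd_elt //;
  rewrite /sd_adj /sd_cell /shift2n; case_lia.
Qed.

Lemma cycle_sd_adj x y : x != y -> sd_adj n (cellg x) (cellg y) ->
  exists z, (x \in <[z]>) && (y \in <[z]>).
Proof.
move=> xy; case/orP=> [/eqP/cellg0P-> |
  /orP[/eqP/cellg0P-> | /orP[/andP[xa ya] | /orP[h | /orP[h | h]]]]].
- by exists y; rewrite group1 cycle_id.
- by exists x; rewrite group1 cycle_id.
- by exists a; rewrite !cellg_le2P.
- case/andP: h => /eqP/cellg1P-> /cellg_midP[l [_ odd_l -> _]].
  by exists (sd_elt l true); rewrite cycle_id -(sd_elt_sqr_odd odd_l) mem_cycle.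
- case/andP: h => /eqP/cellg1P-> /cellg_midP[l [_ odd_l -> _]].
  by exists (sd_elt l true); rewrite cycle_id -(sd_elt_sqr_odd odd_l) mem_cycle.
case/andP: h => /eqP cxy mid_x; have mid_y : (3 <= cellg y <= n + 2)%N by rewrite -cxy.
have [i [lt_i odd_i xE cx]] := cellg_midP mid_x.
have [j [lt_j odd_j yE cy]] := cellg_midP mid_y.
have ij : i != j by apply: contraNneq xy => eq_ij; rewrite xE yE eq_ij.
have ji : j = shift2n n i.
  by move: cy ij; rewrite -cxy cx /sd_cell /shift2n; case_lia.
exists x; rewrite cycle_id yE ji -mul_a2n_sd_elt // -(sd_elt_sqr_odd odd_i) -xE -expgSr.
exact: mem_cycle.
Qed.

Lemma enh_power_adj_cellg x y :
  enh_power_adj x y = (x != y) && sd_adj n (cellg x) (cellg y).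
Proof.
rewrite /enh_power_adj; have [//|xy] := eqVneq x y.
apply/existsP/idP => [[z /andP[xz yz]] | /(cycle_sd_adj xy)//].
exact: sd_adj_cycle xz yz.
Qed.

Local Close Scope group_scope.

Local Ltac sum_by f :=
  rewrite (eq_bigr f);
  last by move=> i _; have := ltn_ord i; rewrite /sd_adj /sd_cell; case_lia.

Lemma card_cellg c : (c < n + 4)%N -> #|[set g | cellg g == c]| = sd_card n c.
Proof.
move=> lt_c; rewrite (card_coord (fun i s => sd_cell n i s == c)) /sd_card.
have n_gt0 := n_gt0; case: ifPn => [/eqP-> | c0].
  by sum_by (fun i : 'I_(4 * n) => (i == 0 :> nat) : nat); rewrite sum_ord_eq; lia.
case: ifPn => [/eqP-> | c1].
  by sum_by (fun i : 'I_(4 * n) => (i == 2 * n :> nat) : nat); rewrite sum_ord_eq; lia.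
case: ifPn => [/eqP-> | c2].
  have : (\sum_(i < 4 * n) (((sd_cell n i true == 2) + (sd_cell n i false == 2))
                            + ((i == 0 :> nat) + (i == 2 * n :> nat))))%N = (4 * n)%N.
    by sum_by (fun i : 'I_(4 * n) => 1%N); rewrite sum1_card card_ord.
  by rewrite !big_split /= !sum_ord_eq; lia.
case: ifPn => [le_c | gt_c].
  have [j -> lt_j] : exists2 j, c = (j + 3)%N & (j < n)%N by exists (c - 3)%N; lia.
  sum_by (fun i : 'I_(4 * n) => (i == 2 * j + 1 :> nat) + (i == 2 * j + 1 + 2 * n :> nat))%N.
  by rewrite big_split /= !sum_ord_eq; lia.
sum_by (fun i : 'I_(4 * n) => ~~ odd i : nat).
by rewrite (_ : 4 * n = 2 * (2 * n))%N ?sum_ord_even //; lia.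
Qed.

Lemma card_sd_adj c : (c < n + 4)%N ->
  #|[set v | sd_adj n c (cellg v)]| = (sd_deg n c + sd_adj n c c)%N.
Proof.
move=> lt_c; rewrite (card_coord (fun i s => sd_adj n c (sd_cell n i s))) /sd_deg.
have n_gt0 := n_gt0; case: ifPn => [/eqP-> | c0].
  by sum_by (fun i : 'I_(4 * n) => 2%N); rewrite sum_nat_const card_ord /sd_adj; lia.
case: ifPn => [/eqP-> | c1].
  sum_by (fun i : 'I_(4 * n) => (odd i + 1)%N).
  rewrite big_split /= sum_nat_const card_ord (_ : 4 * n = 2 * (2 * n))%N ?sum_ord_odd.
    by rewrite /sd_adj; lia.
  by lia.
case: ifPn => [/eqP-> | c2].
  by sum_by (fun i : 'I_(4 * n) => 1%N); rewrite sum_nat_const card_ord /sd_adj; lia.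
case: ifPn => [le_c | gt_c].
  have [j -> lt_j] : exists2 j, c = (j + 3)%N & (j < n)%N by exists (c - 3)%N; lia.
  sum_by (fun i : 'I_(4 * n) => ((i == 2 * j + 1 :> nat) + (i == 2 * j + 1 + 2 * n :> nat))
    + ((i == 0 :> nat) + (i == 2 * n :> nat)))%N.
  by rewrite !big_split /= !sum_ord_eq /sd_adj; lia.
sum_by (fun i : 'I_(4 * n) => (i == 0 :> nat) : nat).
by rewrite sum_ord_eq /sd_adj; lia.
Qed.

Lemma gdeg_cellg x : gdeg (@enh_power_adj gT) x = sd_deg n (cellg x).
Proof.
have := card_sd_adj (cellg_lt x); rewrite (cardsD1 x) inE addnC => /addIn <-.
by rewrite /gdeg; apply: eq_card => v; rewrite !inE enh_power_adj_cellg eq_sym.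
Qed.

End SemiDihedral.

Local Open Scope ring_scope.

Lemma sqrt_sqr_add_same (R : rcfType) (x : R) :
  0 <= x -> Num.sqrt (x ^+ 2 + x ^+ 2) = x * Num.sqrt 2.
Proof.
move=> x_ge0; rewrite -mulr2n -(mulr_natl (x ^+ 2) 2) sqrtrM ?ler0n //.
by rewrite sqrtr_sqr ger0_norm // mulrC.
Qed.

Lemma big_ord_addn4 (R : Type) (idx : R) (op : Monoid.law idx) n (F : nat -> R) :
  \big[op/idx]_(c < n + 4) F c =
  op (F 0%N) (op (F 1%N) (op (F 2%N) (op (\big[op/idx]_(j < n) F (j + 3)%N) (F (n + 3)%N)))).
Proof.
rewrite -(big_mkord xpredT F) (_ : (n + 4 = (n + 3).+1)%N); last by lia.
rewrite big_nat_recr //=; do 3 (rewrite big_ltn; last by lia).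
by rewrite -!Monoid.mulmA (big_addn 0 (n + 3) 3) addnK big_mkord.
Qed.

Section SemiDihedralSombor.
Variables (R : rcfType) (n : nat) (gT : finGroupType) (a b : gT).
Hypothesis sdP : sd_presentation n a b.

Definition cell_of (x : gT) : 'I_(n + 4) := Ordinal (cellg_lt sdP x).

Definition cell_rep (c : 'I_(n + 4)) : gT := sd_elt a b (sd_rep n c).1 (sd_rep n c).2.

Lemma cell_repK : cancel cell_rep cell_of.
Proof.
move=> c; have n_gt0 := n_gt0 sdP; have lt_c := ltn_ord c; apply: val_inj.
rewrite /= /cell_rep (cellg_sd_elt sdP) /sd_rep.
all: by do ? case: ifPn => ?; rewrite /= ?/sd_cell; case_lia.
Qed.

Definition sombor_cell_mx : 'M[R]_(n + 4) :=
  \matrix_(r, c) (if sd_adj n r c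
                  then Num.sqrt ((sd_deg n r)%:R ^+ 2 + (sd_deg n c)%:R ^+ 2) else 0).

Lemma sombor_matrix_cell_const :
  sombor_matrix R (@enh_power_adj gT) = cell_const_mx sombor_cell_mx cell_of.
Proof.
apply/matrixP => i j; rewrite !mxE (enh_power_adj_cellg sdP) !(gdeg_cellg sdP) /=.
by case: (enum_val i != enum_val j); case: (sd_adj _ _ _); rewrite ?mul1r ?mul0r.
Qed.

Lemma cell_card_of c : cell_card cell_of c = sd_card n c.
Proof.
by rewrite /cell_card -(card_cellg sdP) //; apply: eq_card => x; rewrite !inE -val_eqE.
Qed.

Lemma cell_quot_mx_Qmat : cell_quot_mx sombor_cell_mx cell_of = Qmat R n.
Proof.
apply/matrixP => r c; rewrite !mxE cell_card_of -val_eqE /=.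
move: (nat_of_ord r) (nat_of_ord c) (ltn_ord r) (ltn_ord c) => {r c} r c lt_r lt_c.
rewrite /sd_adj /sd_deg /sd_card; have [<-|rc] := eqVneq r c.
all: do ? (case: ifPn => ?; try (exfalso; lia)).
all: rewrite /= ?subn0 ?mul1r ?mul0r ?mulr0 ?mulr1n -?mul2n; try done.
all: try by rewrite addrC.
  rewrite sqrt_sqr_add_same ?ler0n // mulrA -natrM.
  by rewrite (_ : (4 * n - 2 - 1 = 4 * n - 3)%N) //; lia.
exact: (sqrt_sqr_add_same (ler0n R 3)).
Qed.

Lemma cell_eigen_prod :
  \prod_c ('X + (sombor_cell_mx c c)%:P) ^+ (cell_card cell_of c).-1 =
  ('X + ((4 * n - 1)%:R * Num.sqrt 2)%:P) ^+ (4 * n - 3)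
    * 'X ^+ (2 * n - 1) * ('X + (3 * Num.sqrt 2)%:P) ^+ n.
Proof.
pose D c : R :=
  if sd_adj n c c then Num.sqrt ((sd_deg n c)%:R ^+ 2 + (sd_deg n c)%:R ^+ 2) else 0.
rewrite (eq_bigr (fun c : 'I_(n + 4) => ('X + (D c)%:P) ^+ (sd_card n c).-1)); last first.
  by move=> c _; rewrite mxE cell_card_of.
rewrite (big_ord_addn4 _ n (fun c => ('X + (D c)%:P) ^+ (sd_card n c).-1)) /= !expr0 !mul1r.
rewrite (eq_bigr (fun _ => 'X + (3 * Num.sqrt 2)%:P)); last first.
  move=> j _; have := ltn_ord j => lt_j.
  rewrite /D /sd_adj /sd_card /sd_deg; do ? case: ifPn => ?; try lia.
  by rewrite expr1 (sqrt_sqr_add_same (ler0n R 3)).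
rewrite prodr_const card_ord /D /sd_adj /sd_card /sd_deg /=.
do ? case: ifPn => ?; try lia.
rewrite addr0 sqrt_sqr_add_same ?ler0n // -!mulrA; congr (_ ^+ _ * _).
  by lia.
by rewrite mulrC; congr (_ ^+ _ * _); lia.
Qed.

End SemiDihedralSombor.

Theorem theorem5p4 (R : rcfType) (n : nat) (gT : finGroupType) (a b : gT) :
  (2 <= n)%N ->
  #|gT| = (8 * n)%N ->
  <<[set a; b]>>%g = [set: gT] ->
  (a ^+ (4 * n) = 1)%g -> (b ^+ 2 = 1)%g ->
  (b * a = a ^+ (2 * n - 1) * b)%g ->
  char_poly (sombor_matrix R (@enh_power_adj gT)) =
    ('X + ((4 * n - 1)%:R * Num.sqrt 2)%:P) ^+ (4 * n - 3)
    * 'X ^+ (2 * n - 1)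
    * ('X + (3 * Num.sqrt 2)%:P) ^+ n
    * char_poly (Qmat R n).
Proof.
move=> _ cardG gen a4n b2 ba; have sdP : sd_presentation n a b by [].
rewrite (sombor_matrix_cell_const R sdP) (char_poly_cell_const_mx _ (cell_repK sdP)).
by rewrite cell_quot_mx_Qmat cell_eigen_prod mulrC.
Qed.
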